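(* For $n\ge1$ let $$\Delta_n(t)=\sum_{k=0}^{n-1}(-1)^k(2k+1)\big(t^k+t^{2n-k}\big)+(-1)^n(2n+1)t^n,$$ the Alexander polynomial of the 2-bridge knot $K([\underbrace{2,\dots,2}_{n},\underbrace{-2,\dots,-2}_{n}])$. Then no zero of $\Delta_n$ has modulus $1$. Moreover: (1) if $n$ is odd, $\Delta_n$ has exactly two real zeros and all other zeros are non-real; (2) if $n$ is even, $\Delta_n$ has no real zeros. *)

From HB Require Import structures.
From mathcomp Require Import all_boot all_order all_algebra.
Set Implicit Arguments. Unset Strict Implicit. Unset Printing Implicit Defensive.
Import Order.TTheory GRing.Theory Num.Theory.
Local Open Scope ring_scope.

Definition Delta (R : nzRingType) (n : nat) : {poly R} :=
  \sum_(k < n) (((-1) ^+ k * (2 * k + 1)%:R) *: ('X^k + 'X^(2 * n - k)))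
  + ((-1) ^+ n * (2 * n + 1)%:R) *: 'X^n.

From HB Require Import structures.
From mathcomp Require Import all_boot all_order all_algebra.
From mathcomp.algebra_tactics Require Import ring.
From mathcomp Require Import zify.
Import Order.TTheory GRing.Theory Num.Theory.
Local Open Scope ring_scope.

(* The whole argument rests on the closed form
       (t + 1)^2 Delta_n(t) = Phi_n(t) := (t - 1)(t^(2n+1) - 1) + 4 (-1)^n t^(n+1),
   obtained by telescoping the two halves of the sum (section ClosedForm).
   Besides, at a nonpositive real -u all signs of Delta_n cancel, so Delta_n is
   positive on (-oo, 0]: every real root is positive, and -1 is not a root.
   - Unit circle: if |t| = 1 then conj t = 1/t, and Phi_n(t) = 0 forces
     |s t^n t + 1|^2 + |s t^n - 1|^2 = 0 (s = (-1)^n), hence t = -1.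
   - n even: Phi_n > 0 on (0, +oo), so there is no real root.
   - n odd: on (0, +oo), Phi_n(t) = t^(n+1) (H_n(t) - 4) where
     H_n(t) = (t - 1)(t^n - t^-(n+1)) is increasing on (1, +oo); Phi_n(1) < 0 <
     Phi_n(4) and an intermediate value theorem for real polynomials over a
     numeric closed field (section RealPolynomialIVT) give exactly one root
     r > 1, and the palindromic symmetry t |-> 1/t shows that the real roots
     are exactly r and 1/r. *)

Section ClosedForm.
Context {R : comNzRingType}.
Implicit Types (n : nat) (t : R).

(* The right-hand side of the closed form of Delta_n:
   (t - 1) (t^(2n+1) - 1) + 4 (-1)^n t^(n+1), with powers kept as products
   of t^n and t so that they are ring atoms. *)
Definition Phi n t : R :=
  (t - 1) * (t ^+ n * t ^+ n * t - 1) + 4 * (-1) ^+ n * t ^+ n * t.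

Lemma horner_Delta n t : (Delta R n).[t] =
  \sum_(k < n) ((-1) ^+ k * (2 * k + 1)%:R) * (t ^+ k + t ^+ (2 * n - k))
  + ((-1) ^+ n * (2 * n + 1)%:R) * t ^+ n.
Proof.
rewrite /Delta hornerD horner_sum hornerZ hornerXn; congr (_ + _).
by apply: eq_bigr => k _; rewrite hornerZ hornerD !hornerXn.
Qed.

Lemma lower_half_sum n t :
  (t + 1) ^+ 2 * \sum_(k < n) ((-1) ^+ k * (2 * k + 1)%:R) * t ^+ k
  = 1 - t - (-1) ^+ n * (2 * n%:R + 1) * t ^+ n
    - (-1) ^+ n * (2 * n%:R - 1) * t ^+ n * t.
Proof.
elim: n => [|n IHn]; first by rewrite big_ord0 !expr0; ring.
by rewrite big_ord_recr /= mulrDr IHn !exprS; ring.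
Qed.

Lemma upper_half_sum n t :
  (t + 1) ^+ 2 * \sum_(k < n) ((-1) ^+ k * (2 * k + 1)%:R) * t ^+ (2 * n - k)
  = t ^+ n * t ^+ n * t * t - t ^+ n * t ^+ n * t
    - (-1) ^+ n * (2 * n%:R + 1) * t ^+ n * t * t
    - (-1) ^+ n * (2 * n%:R - 1) * t ^+ n * t.
Proof.
elim: n => [|n IHn]; first by rewrite big_ord0 !expr0; ring.
have shift (i : 'I_n) : (-1) ^+ i * (2 * i + 1)%:R * t ^+ (2 * n.+1 - i)
    = (-1) ^+ i * (2 * i + 1)%:R * t ^+ (2 * n - i) * (t * t).
  rewrite -!mulrA -expr2 -exprD; do 2 congr (_ * _); congr (_ ^+ _).
  by have := ltn_ord i; lia.
rewrite big_ord_recr /=; under eq_bigr do rewrite shift.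
have -> : (2 * n.+1 - n = n + 2)%N by lia.
by rewrite -mulr_suml mulrDr mulrA IHn !exprD !exprS expr0; ring.
Qed.

Lemma Delta_closed_form n t : (t + 1) ^+ 2 * (Delta R n).[t] = Phi n t.
Proof.
rewrite horner_Delta mulrDr; under eq_bigr do rewrite mulrDr.
by rewrite big_split /= mulrDr lower_half_sum upper_half_sum /Phi; ring.
Qed.

Lemma circle_identity {t w T W s : R} : t * w = 1 -> T * W = 1 -> s * s = 1 ->
  (s * T * t + 1) * (s * W * w + 1) + (s * T - 1) * (s * W - 1)
  = s * W * w * ((t - 1) * (T * T * t - 1) + 4 * s * T * t).
Proof.
move=> tw TW ss.
transitivity ((s * s) * (T * W) * (t * w) + (s * s) * (T * W) + 2
              + s * (T * t - T - W + W * w)); first by ring.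
transitivity (s * (T * t * ((T * W) * (t * w)) - T * ((T * W) * (t * w))
                   - W * (t * w) + W * w) + 4 * (s * s) * (T * W) * (t * w));
  last by ring.
by rewrite tw TW ss; ring.
Qed.

End ClosedForm.

Lemma Phi_inv {R : comUnitRingType} n {t : R} : t \is a GRing.unit ->
  Phi n t^-1 * (t ^+ n * t ^+ n * t * t) = Phi n t.
Proof.
move=> tU; have wt : t^-1 * t = 1 by rewrite mulVr.
have WT : t^-1 ^+ n * t ^+ n = 1 by rewrite -exprMn wt expr1n.
transitivity ((t^-1 * t - t)
    * ((t^-1 ^+ n * t ^+ n) * (t^-1 ^+ n * t ^+ n) * (t^-1 * t) - t ^+ n * t ^+ n * t)
  + 4 * (-1) ^+ n * ((t^-1 ^+ n * t ^+ n) * (t^-1 * t)) * (t ^+ n * t)).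
  by rewrite /Phi; ring.
by rewrite WT wt /Phi; ring.
Qed.

(* Delta_n has integer coefficients, so it commutes with ring morphisms. *)
Lemma map_Delta (R S : nzRingType) (f : {rmorphism R -> S}) n :
  map_poly f (Delta R n) = Delta S n.
Proof.
have mapc k : f ((-1) ^+ k * (2 * k + 1)%:R) = (-1) ^+ k * (2 * k + 1)%:R.
  by rewrite rmorphM rmorphXn rmorphN1 rmorph_nat.
rewrite /Delta rmorphD rmorph_sum /= (map_polyZ f).
congr (_ + _ *: _); [|exact: mapc|exact: map_polyXn].
apply: eq_bigr => k _; rewrite (map_polyZ f); congr (_ *: _); first exact: mapc.
by rewrite rmorphD; congr (_ + _); exact: map_polyXn.
Qed.

(* At a negative argument every sign of Delta_n cancels: the two exponents
   k and 2n - k of each coefficient (-1)^k (2k+1) have the same parity. *)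
Lemma Delta_at_opp (R : comNzRingType) n (u : R) : (Delta R n).[- u] =
  \sum_(k < n) (2 * k + 1)%:R * (u ^+ k + u ^+ (2 * n - k))
  + (2 * n + 1)%:R * u ^+ n.
Proof.
have sign_cancel k (c x : R) : (-1) ^+ k * c * ((-1) ^+ k * x) = c * x.
  by rewrite mulrACA -exprMn mulrNN mulr1 expr1n mul1r.
rewrite horner_Delta [(- u) ^+ n]exprNn sign_cancel; congr (_ + _); apply: eq_bigr => k _.
rewrite [(- u) ^+ k]exprNn [(- u) ^+ (2 * n - k)]exprNn.
have -> : (-1) ^+ (2 * n - k) = (-1) ^+ k :> R.
  by rewrite -signr_odd oddB ?oddM ?signr_odd //; have := ltn_ord k; lia.
by rewrite -mulrDr sign_cancel.
Qed.

Lemma Delta_opp_gt0 (R : numDomainType) n (u : R) : 0 <= u -> 0 < (Delta R n).[- u].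
Proof.
move=> u0; rewrite Delta_at_opp.
have term_ge0 k m : 0 <= (2 * k + 1)%:R * (u ^+ k + u ^+ m) :> R.
  by rewrite mulr_ge0 ?ler0n ?addr_ge0 ?exprn_ge0.
case: n => [|n]; first by rewrite big_ord0 add0r mul1r expr0 ltr01.
rewrite big_ord_recl /= -addrA; apply: ltr_pwDl.
  by rewrite muln0 expr0 mul1r ltr_pwDl ?ltr01 ?exprn_ge0.
by rewrite addr_ge0 ?mulr_ge0 ?ler0n ?exprn_ge0 ?sumr_ge0 // => k _; exact: term_ge0.
Qed.

Section PhiOnPositiveReals.
Context {R : numFieldType}.
Implicit Types (n : nat) (t x y : R).

Lemma sub1_mul_expr_ge0 k t : 0 <= t -> 0 <= (t - 1) * (t ^+ k - 1).
Proof.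
move=> t0; have [t1 | t1] := real_leP (ger0_real t0) (real1 R).
  by rewrite mulr_le0 // subr_le0 // exprn_ile1.
by rewrite mulr_ge0 // subr_ge0 ?exprn_ege1 // ltW.
Qed.

Lemma Phi_even_gt0 {n t} : ~~ odd n -> 0 < t -> 0 < Phi n t.
Proof.
move=> n_even t0; rewrite /Phi -signr_odd (negbTE n_even) expr0 mulr1.
have -> : t ^+ n * t ^+ n * t = t ^+ (n + n).+1 by rewrite exprS exprD mulrC.
by rewrite ltr_wpDl ?sub1_mul_expr_ge0 ?ltW // !mulr_gt0 ?exprn_gt0 ?ltr0n.
Qed.

Definition H n t : R := (t - 1) * (t ^+ n - (t ^+ n * t)^-1).

Lemma Phi_odd_H n t : odd n -> t != 0 -> Phi n t = t ^+ n * t * (H n t - 4).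
Proof.
move=> n_odd t0; have tn0 : t ^+ n * t != 0 by rewrite mulf_neq0 ?expf_neq0.
have TH : t ^+ n * t * H n t = (t - 1) * (t ^+ n * t ^+ n * t - 1).
  by rewrite /H mulrCA mulrBr (mulfV tn0); ring.
by rewrite mulrBr TH /Phi -signr_odd n_odd expr1; ring.
Qed.

(* H_n is strictly increasing on (1, +oo): both factors are positive there
   and increasing. *)
Lemma H_increasing n {x y} : 1 < x -> x < y -> H n x < H n y.
Proof.
move=> x1 xy; have y1 := lt_trans x1 xy.
have [x0 y0] : 0 < x /\ 0 < y by split; apply: lt_trans ltr01 _.
have [xN yN] : x \is Num.nneg /\ y \is Num.nneg by rewrite !nnegrE !ltW.
have Gx_gt0 : 0 < x ^+ n - (x ^+ n * x)^-1.
  rewrite subr_gt0 (@lt_le_trans _ _ 1) ?exprn_ege1 ?ltW //.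
  by rewrite invf_lt1 ?mulr_gt0 ?exprn_gt0 // -exprSr exprn_egt1.
have G_le : x ^+ n - (x ^+ n * x)^-1 <= y ^+ n - (y ^+ n * y)^-1.
  apply: lerB; first exact: (lerXn2r n xN yN (ltW xy)).
  rewrite lef_pV2 ?posrE ?mulr_gt0 ?exprn_gt0 // -!exprSr.
  exact: (lerXn2r n.+1 xN yN (ltW xy)).
apply: (lt_le_trans (y := (y - 1) * (x ^+ n - (x ^+ n * x)^-1))).
  by rewrite ltr_pM2r // ltrD2r.
by rewrite ler_pM2l // subr_gt0.
Qed.

Lemma Phi_odd_root_uniq {n x y} : odd n -> 1 < x -> 1 < y ->
  Phi n x = 0 -> Phi n y = 0 -> x = y.
Proof.
move=> n_odd x1 y1 Phix Phiy.
have H4 t : 1 < t -> Phi n t = 0 -> H n t = 4.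
  move=> t1; have t0 : 0 < t := lt_trans ltr01 t1.
  rewrite Phi_odd_H ?gt_eqF // => /eqP.
  by rewrite mulf_eq0 subr_eq0 mulf_eq0 expf_eq0 gt_eqF // andbF /= => /eqP.
have [xR yR] : x \is Num.real /\ y \is Num.real by rewrite !ger1_real ?ltW.
case: (real_ltgtP xR yR) => // [xy | yx].
  by have := H_increasing n x1 xy; rewrite !H4 ?ltxx.
by have := H_increasing n y1 yx; rewrite !H4 ?ltxx.
Qed.

Lemma Phi_odd_at1 n : odd n -> Phi n (1 : R) = -4.
Proof. by move=> n_odd; rewrite /Phi -signr_odd n_odd !expr1n; ring. Qed.

Lemma Phi_odd_at4 n : odd n -> 0 < Phi n (4 : R).
Proof.
move=> n_odd; have n1 : (1 <= n)%N by case: n n_odd.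
have fourn : (4 <= 4 ^ n)%N by rewrite -{1}(expn1 4) leq_pexp2l.
have -> : Phi n (4 : R) = (12 * 4 ^ n * 4 ^ n)%:R - (16 * 4 ^ n + 3)%:R.
  by rewrite /Phi -signr_odd n_odd -natrX; ring.
by rewrite subr_gt0 ltr_nat; nia.
Qed.

End PhiOnPositiveReals.

Section RealPolynomialIVT.
Context {C : numClosedFieldType}.
Implicit Types (p q m : {poly C}) (a b x z : C).

Definition real_poly p : Prop := map_poly Num.conj p = p.

Lemma real_poly_divl q m : m != 0 -> real_poly m -> real_poly (q * m) -> real_poly q.
Proof. by move=> m0 Rm; rewrite /real_poly rmorphM /= Rm => /(mulIf m0). Qed.

Lemma real_poly_XsubC z : z \is Num.real -> real_poly ('X - z%:P).
Proof. by move=> zR; rewrite /real_poly rmorphB /= map_polyX map_polyC /= conj_Creal. Qed.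

Lemma real_poly_conj_pair z : real_poly (('X - z^*%:P) * ('X - z%:P)).
Proof.
by rewrite /real_poly !(rmorphM, rmorphB) /= map_polyX !map_polyC /= conjCK mulrC.
Qed.

Lemma conj_pair_gt0 {z x} : z \notin Num.real -> x \is Num.real ->
  0 < (('X - z^*%:P) * ('X - z%:P)).[x].
Proof.
move=> zNR xR; rewrite hornerM !hornerXsubC.
have -> : x - z^* = (x - z)^* by rewrite rmorphB /= (conj_Creal xR).
by rewrite mulrC mul_conjC_gt0 subr_eq0; apply: contraNneq zNR => <-.
Qed.

Lemma linear_factor_sign {z a b} : z \is Num.real -> a \is Num.real ->
  b \is Num.real -> a <= b -> (a <= z <= b) \/ 0 < (a - z) * (b - z).
Proof.
move=> zR aR bR ab; case: (boolP (a <= z <= b)) => [|zNab]; first by left.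
right; move: zNab; rewrite negb_and -(real_ltNge zR aR) -(real_ltNge bR zR).
case/orP=> [za|bz].
  by rewrite mulr_gt0 // subr_gt0 // (lt_le_trans za).
by rewrite -mulrNN !opprB mulr_gt0 // subr_gt0 // (le_lt_trans ab).
Qed.

Lemma real_sqr_le0 {x} : x^* = x -> x * x <= 0 -> x = 0.
Proof.
move=> xR; rewrite -expr2 => x2le0; apply/eqP.
by rewrite -[x == 0](expf_eq0 x 2) eq_le x2le0 real_exprn_even_ge0 // CrealE xR.
Qed.

Lemma real_poly_split {p} : real_poly p -> (1 < size p)%N ->
  exists q m, [/\ p = q * m, real_poly q, (size q < size p)%N &
    forall a b, a \is Num.real -> b \is Num.real -> a <= b ->
      (exists x, [/\ a <= x, x <= b & root m x]) \/ 0 < m.[a] * m.[b]].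
Proof.
move=> Rp p_gt1; have [z pz] : exists z, root p z.
  by apply/closed_rootP; rewrite gtn_eqF.
have [q1 pq1] := factor_theorem _ _ pz.
have q1_0 : q1 != 0 by apply: contraTneq p_gt1 => q1_0; rewrite pq1 q1_0 mul0r size_poly0.
have size_q1 : size p = (size q1).+1.
  by rewrite pq1 size_Mmonic ?monicXsubC // size_XsubC addn2.
have [zR | zNR] := boolP (z \is Num.real).
  exists q1, ('X - z%:P); split => //.
  - apply: (@real_poly_divl q1 ('X - z%:P)); last by rewrite -pq1.
      exact: monic_neq0 (monicXsubC z).
    exact: real_poly_XsubC.
  - by rewrite size_q1.
  move=> a b aR bR ab; rewrite !hornerXsubC.
  have [/andP[az zb] | pos] := linear_factor_sign zR aR bR ab; last by right.
  by left; exists z; rewrite az zb root_XsubC.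
have [q pq] : exists q, q1 = q * ('X - z^*%:P).
  apply/factor_theorem; have : root p z^*.
    by rewrite /root -Rp horner_map /= (eqP pz) conjC0.
  by rewrite pq1 rootM root_XsubC -CrealE (negbTE zNR) orbF.
exists q, (('X - z^*%:P) * ('X - z%:P)); split.
- by rewrite pq1 pq mulrA.
- apply: (@real_poly_divl q (('X - z^*%:P) * ('X - z%:P))).
  + by rewrite mulf_neq0 // monic_neq0 // monicXsubC.
  + exact: real_poly_conj_pair.
  + by rewrite mulrA -pq -pq1.
- have q_0 : q != 0 by apply: contraNneq q1_0 => q_0; rewrite pq q_0 mul0r.
  by rewrite size_q1 pq size_Mmonic ?monicXsubC // size_XsubC addn2.
- by move=> a b aR bR _; right; rewrite mulr_gt0 ?conj_pair_gt0.
Qed.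

Lemma real_poly_ivt {p a b} : real_poly p -> a \is Num.real -> b \is Num.real ->
  a <= b -> p.[a] * p.[b] <= 0 -> exists x, [/\ a <= x, x <= b & root p x].
Proof.
move=> + aR bR ab; elim: {p}(size p).+1 {-2}p (ltnSn (size p)) => // s IHs p.
rewrite ltnS => size_p Rp change.
have [p_le1 | p_gt1] := leqP (size p) 1.
  have [c pc] : exists c, p = c%:P by exists p`_0; exact: size1_polyC.
  have cR : c^* = c by move: Rp; rewrite /real_poly pc map_polyC /= => /polyC_inj.
  move: change; rewrite pc !hornerC => /(real_sqr_le0 cR) ->.
  by exists a; rewrite lexx ab rootC.
have [q [m [pqm Rq size_q m_sign]]] := real_poly_split Rp p_gt1.
have [[x [ax xb mx]] | m_pos] := m_sign a b aR bR ab.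
  by exists x; rewrite ax xb pqm rootM mx orbT.
have [|x [ax xb qx]] := IHs q (leq_trans size_q size_p) Rq.
  by move: change; rewrite pqm !hornerM mulrACA pmulr_lle0.
by exists x; rewrite ax xb pqm rootM qx.
Qed.

End RealPolynomialIVT.

Section RootsOfDelta.
Context {C : numClosedFieldType}.
Implicit Types (n : nat) (t z : C).

Lemma Delta_nonpos_root n z : z <= 0 -> ~~ root (Delta C n) z.
Proof. by move=> z0; rewrite /root -[z]opprK gt_eqF // Delta_opp_gt0 // oppr_ge0. Qed.

Lemma root_Delta_neq {n t} : root (Delta C n) t -> (t != -1) && (t != 0).
Proof.
move=> rt; apply/andP; split; apply: contraTneq rt => ->.
  by rewrite Delta_nonpos_root // oppr_le0 ler01.
by rewrite Delta_nonpos_root.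
Qed.

Lemma root_DeltaE n t : t != -1 -> root (Delta C n) t = (Phi n t == 0).
Proof.
move=> t_m1; rewrite -Delta_closed_form mulf_eq0 expf_eq0 /=.
by rewrite addr_eq0 (negbTE t_m1).
Qed.

Lemma root_Delta_Phi {n t} : root (Delta C n) t -> Phi n t = 0.
Proof.
by move=> rt; have /andP[t_m1 _] := root_Delta_neq rt; apply/eqP; rewrite -root_DeltaE.
Qed.

(* The roots of Delta_n are closed under inversion (Delta_n is palindromic). *)
Lemma root_Delta_inv {n t} : root (Delta C n) t -> root (Delta C n) t^-1.
Proof.
move=> rt; have /andP[t_m1 t0] := root_Delta_neq rt.
rewrite root_DeltaE; last by rewrite -invrN1 (inj_eq invr_inj).
have := @Phi_inv _ n t; rewrite unitfE t0 (root_Delta_Phi rt) => /(_ isT) /eqP.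
have tpow : t ^+ n * t ^+ n * t * t != 0 by rewrite !mulf_neq0 ?expf_neq0.
by rewrite mulf_eq0 (negbTE tpow) orbF.
Qed.

Lemma real_root_Delta_gt0 {n z} : z \is Num.real -> root (Delta C n) z -> 0 < z.
Proof.
move=> zR; apply: contraTT; rewrite -real_leNgt ?real0 //.
exact: Delta_nonpos_root.
Qed.

(* No root of Delta_n lies on the unit circle: there t^* = 1/t, and by
   circle_identity a root t would give |s t^n t + 1|^2 + |s t^n - 1|^2 = 0 with
   s = (-1)^n, forcing s t^n = 1 and then t = -1, which is not a root. *)
Lemma root_Delta_norm {n t} : root (Delta C n) t -> `|t| != 1.
Proof.
move=> rt; apply/negP => /eqP t_norm1.
have /andP[t_m1 _] := root_Delta_neq rt.
have Phit := root_Delta_Phi rt; rewrite /Phi in Phit.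
set s : C := (-1) ^+ n in Phit; set T := t ^+ n in Phit.
have s_conj : s^* = s by rewrite /s rmorphXn rmorphN1.
have tw : t * t^* = 1 by rewrite -normCK t_norm1 expr1n.
have TW : T * T^* = 1 by rewrite /T rmorphXn -exprMn tw expr1n.
have ss : s * s = 1 by rewrite /s -exprMn mulrNN mulr1 expr1n.
have := circle_identity tw TW ss; rewrite Phit mulr0.
have -> : s * T^* * t^* + 1 = (s * T * t + 1)^*.
  by rewrite rmorphD !rmorphM /= s_conj rmorph1.
have -> : s * T^* - 1 = (s * T - 1)^* by rewrite rmorphB rmorphM /= s_conj rmorph1.
move/eqP; rewrite paddr_eq0 ?mul_conjC_ge0 // !mul_conjC_eq0 addr_eq0 subr_eq0.
case/andP=> /eqP sTt /eqP sT; move: sTt; rewrite sT mul1r => t_eq.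
by rewrite t_eq eqxx in t_m1.
Qed.

(* For even n, Delta_n has no real root: real roots are positive, where Phi_n
   does not vanish. *)
Lemma Delta_even_real_root {n z} : ~~ odd n -> root (Delta C n) z -> z \notin Num.real.
Proof.
move=> n_even rz; apply/negP => zR.
have := Phi_even_gt0 n_even (real_root_Delta_gt0 zR rz).
by rewrite root_Delta_Phi ?ltxx.
Qed.

(* For odd n, Delta_n changes sign on [1, 4], hence has a root r > 1. *)
Lemma Delta_odd_root_gt1 {n} : odd n -> exists2 r : C, 1 < r & root (Delta C n) r.
Proof.
move=> n_odd; have R_Delta : real_poly (Delta C n) by exact: map_Delta.
have D1 : (Delta C n).[1] < 0.
  rewrite -(pmulr_rlt0 _ (exprn_gt0 2 (ltr0Sn C 1))) Delta_closed_form.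
  by rewrite Phi_odd_at1 // oppr_lt0 ltr0n.
have D4 : 0 < (Delta C n).[4].
  rewrite -(pmulr_rgt0 _ (exprn_gt0 2 (ltr0Sn C 4))) -natr1 Delta_closed_form.
  exact: Phi_odd_at4.
have [|r [r1 r4 rr]] := real_poly_ivt R_Delta (real1 C) (realn C 4) (ler_nat C 1 4).
  by rewrite nmulr_rle0 // ltW.
exists r => //; rewrite lt_neqAle r1 andbT; apply: contraTneq rr => <-.
by rewrite /root lt_eqF.
Qed.

Lemma Delta_odd_real_roots {n r z} : odd n -> 1 < r -> root (Delta C n) r ->
  z \is Num.real -> root (Delta C n) z -> z = r \/ z = r^-1.
Proof.
move=> n_odd r1 rr zR rz; have z0 := real_root_Delta_gt0 zR rz.
have Phir := root_Delta_Phi rr.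
case: (real_ltgtP zR (real1 C)) => [z1 | z1 | z_eq1].
- right; rewrite -[z]invrK; congr (_^-1).
  apply: Phi_odd_root_uniq n_odd _ r1 (root_Delta_Phi (root_Delta_inv rz)) Phir.
  by rewrite invf_gt1.
- by left; exact: Phi_odd_root_uniq n_odd z1 r1 (root_Delta_Phi rz) Phir.
- have := root_Delta_Phi rz; rewrite z_eq1 Phi_odd_at1 // => /eqP.
  by rewrite oppr_eq0 pnatr_eq0.
Qed.

End RootsOfDelta.

Theorem theoremC4 (C : numClosedFieldType) (n : nat) (hn : (1 <= n)%N) :
  (forall z : C, root (Delta C n) z -> `|z| != 1) /\
  (odd n -> exists a b : C,
     [/\ a != b, a \is Num.real /\ b \is Num.real,
         root (Delta C n) a /\ root (Delta C n) b &
         forall z : C, root (Delta C n) z -> z \is Num.real -> z = a \/ z = b]) /\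
  (~~ odd n -> forall z : C, root (Delta C n) z -> z \notin Num.real).
Proof.
split; [by move=> z; exact: root_Delta_norm | split; last first].
  by move=> n_even z; exact: Delta_even_real_root.
move=> n_odd; have [r r1 rr] := @Delta_odd_root_gt1 C n n_odd.
have r0 : 0 < r := lt_trans ltr01 r1.
exists r, r^-1; split.
- by rewrite gt_eqF // (lt_trans _ r1) // invf_lt1.
- by split; apply: gtr0_real; rewrite ?invr_gt0.
- by split; last exact: root_Delta_inv.
- by move=> z rz zR; exact: Delta_odd_real_roots n_odd r1 rr zR rz.
Qed.
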